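(* Let $p\in\mathbb Q\cap(2,\infty)$, write $1/p=a/b$ with $a,b\in\mathbb N$ coprime, and let $k=\lceil\log_2(b+1)\rceil$. Then $\{(u,v,t)\in\mathbb R^3_+:v^{p/(p-2)}\le tu^{2/(p-2)}\}$ equals the set of $(u,v,t)\in\mathbb R^3$ for which there exist $\boldsymbol z^i\in\mathbb R^{2^i}$, $i=1,\dots,k-1$, with $$\begin{cases}\|(v,\tfrac12(z^1_1-z^1_2))\|_2\le\tfrac12(z^1_1+z^1_2)\\ \|(z^i_j,\tfrac12(z^{i+1}_{2j-1}-z^{i+1}_{2j}))\|_2\le\tfrac12(z^{i+1}_{2j-1}+z^{i+1}_{2j}) & i=1,\dots,k-2,\ j=1,\dots,2^i\\ z^{k-1}_j\le u & j=1,\dots,a\\ z^{k-1}_j\le t & j=a+1,\dots,\lfloor b/2\rfloor\\ \|(z^{k-1}_j,\tfrac12(t-v))\|_2\le\tfrac12(t+v) & j=\lfloor b/2\rfloor+1,\dots,\lceil b/2\rceil\\ z^{k-1}_j\le v & j=\lceil b/2\rceil+1,\dots,2^{k-1}\\ \boldsymbol z^i\ge\boldsymbol0 & i=1,\dots,k-1\\ u\ge0,\ v\ge0,\ t\ge0.\end{cases}$$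
   Context: $\|\cdot\|_2$ is the Euclidean norm of the indicated 2-vector; $\mathbb R^3_+$ is the nonnegative orthant. *)

From HB Require Import structures.
From mathcomp Require Import all_boot all_order all_algebra.
From mathcomp Require Import all_classical all_reals all_analysis.
Set Implicit Arguments.
Unset Strict Implicit.
Unset Printing Implicit Defensive.
Import Order.TTheory GRing.Theory Num.Theory.
Local Open Scope ring_scope.

Definition norm2 {R : realType} (x y : R) : R := Num.sqrt (x ^+ 2 + y ^+ 2).

(* For y, w >= 0 the constraint ||(x, (y - w)/2)||_2 <= (y + w)/2 says x^2 <= y w.
   The system therefore describes a binary tree of depth n = k - 1 rooted at v,
   in which every node squared is at most the product of its two children, and
   whose 2^n leaves are bounded by u (a of them), t (b/2 - a of them), sqrt(t v)
   (one, if b is odd) and v (the rest).  Along such a tree v^(2^n) is at most the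
   product of the leaf bounds, whose square is u^(2a) t^(b-2a) v^(2^(n+1) - b);
   conversely the tree of iterated geometric means of the leaf bounds attains
   this.  So the system amounts to v^b <= u^(2a) t^(b-2a), which for p = b/a is
   the power-cone inequality raised to the power b - 2a. *)

From HB Require Import structures.
From mathcomp Require Import all_boot all_order all_algebra.
From mathcomp Require Import all_classical all_reals all_analysis.
From mathcomp Require Import zify ring.
Set Implicit Arguments.
Unset Strict Implicit.
Unset Printing Implicit Defensive.

Import Order.TTheory GRing.Theory Num.Theory.
Local Open Scope ring_scope.

Lemma rotated_coneE (R : realType) (x y w : R) : 0 <= y -> 0 <= w ->
  (norm2 x ((y - w) / 2) <= (y + w) / 2) = (x ^+ 2 <= y * w).
Proof.
move=> y0 w0; have m0 : 0 <= (y + w) / 2 by rewrite divr_ge0 ?addr_ge0.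
rewrite /norm2 -[X in _ <= X](ger0_norm m0) -sqrtr_sqr ler_sqrt ?sqr_ge0 //.
have -> : ((y + w) / 2) ^+ 2 = y * w + ((y - w) / 2) ^+ 2 by field.
by rewrite lerD2r.
Qed.

Section LevelProducts.
Variable R : comPzSemiRingType.
Implicit Types (z : nat -> nat -> R) (f : nat -> R).

Definition level_prod z i : R := \prod_(j < 2 ^ i) z i j.+1.

Definition children_prod z i j : R := z i.+1 (2 * j - 1)%N * z i.+1 (2 * j)%N.

Lemma prod_pairs f m :
  \prod_(j < 2 * m) f j.+1 = \prod_(j < m) (f (2 * j).+1 * f (2 * j).+2).
Proof.
elim: m => [|m IHm]; first by rewrite muln0 !big_ord0.
by rewrite mulnS !big_ord_recr /= IHm mulrA.
Qed.

Lemma level_prod0 z : level_prod z 0 = z 0%N 1%N.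
Proof. by rewrite /level_prod big_ord1. Qed.

Lemma level_prodS z i :
  level_prod z i.+1 = \prod_(j < 2 ^ i) children_prod z i j.+1.
Proof.
rewrite /level_prod expnS prod_pairs; apply: eq_bigr => j _.
by rewrite /children_prod mulnS subn1.
Qed.

Lemma level_prod_sqr z i :
  (forall j, (1 <= j <= 2 ^ i)%N -> z i j ^+ 2 = children_prod z i j) ->
  level_prod z i ^+ 2 = level_prod z i.+1.
Proof.
move=> node; rewrite level_prodS /level_prod -prodrXl.
by apply: eq_bigr => j _; rewrite node //= ltn_ord.
Qed.

Lemma sqr_chain_eq f n :
  (forall i, (i < n)%N -> f i ^+ 2 = f i.+1) -> f 0%N ^+ (2 ^ n) = f n.
Proof.
elim: n => [|n IHn] step; first by rewrite expr1.
by rewrite expnSr exprM IHn => [|i lt_in]; rewrite step // ltnW.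
Qed.

End LevelProducts.

Section LevelBounds.
Variable R : numDomainType.
Implicit Types (z : nat -> nat -> R) (f : nat -> R).

Lemma level_prod_ge0 z i :
  (forall j, (1 <= j <= 2 ^ i)%N -> 0 <= z i j) -> 0 <= level_prod z i.
Proof. by move=> z_ge0; apply: prodr_ge0 => j _; rewrite z_ge0 //= ltn_ord. Qed.

Lemma level_prod_sqr_le z i :
  (forall j, (1 <= j <= 2 ^ i)%N -> 0 <= z i j) ->
  (forall j, (1 <= j <= 2 ^ i)%N -> z i j ^+ 2 <= children_prod z i j) ->
  level_prod z i ^+ 2 <= level_prod z i.+1.
Proof.
move=> z_ge0 node; rewrite level_prodS /level_prod -prodrXl.
apply: ler_prod => j _.
have j_range : (0 < j.+1 <= 2 ^ i)%N by rewrite /= ltn_ord.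
by rewrite exprn_ge0 ?z_ge0 ?node.
Qed.

Lemma sqr_chain_le f n :
  (forall i, (i < n)%N -> 0 <= f i) ->
  (forall i, (i < n)%N -> f i ^+ 2 <= f i.+1) -> f 0%N ^+ (2 ^ n) <= f n.
Proof.
elim: n => [|n IHn] f_ge0 step; first by rewrite expr1.
have IH : f 0%N ^+ (2 ^ n) <= f n.
  by apply: IHn => i lt_in; [apply: f_ge0 | apply: step]; rewrite ltnW.
have pow_ge0 : 0 <= f 0%N ^+ (2 ^ n) by rewrite exprn_ge0 ?f_ge0.
rewrite expnSr exprM (le_trans _ (step n _)) // lerXn2r //.
by rewrite nnegrE (le_trans pow_ge0 IH).
Qed.

End LevelBounds.

Section GeometricMeanTree.
Variable R : rcfType.
Variable B : nat -> R.
Hypothesis B_ge0 : forall j, 0 <= B j.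

Fixpoint geo_mean_tree (d j : nat) : R :=
  if d is d'.+1 then
    Num.sqrt (geo_mean_tree d' (2 * j - 1)%N * geo_mean_tree d' (2 * j)%N)
  else B j.

Lemma geo_mean_tree_ge0 d j : 0 <= geo_mean_tree d j.
Proof. by case: d => [|d] /=; rewrite ?B_ge0 ?sqrtr_ge0. Qed.

Lemma geo_mean_treeS_sqr d j :
  geo_mean_tree d.+1 j ^+ 2
  = geo_mean_tree d (2 * j - 1)%N * geo_mean_tree d (2 * j)%N.
Proof. by rewrite /= sqr_sqrtr // mulr_ge0 ?geo_mean_tree_ge0. Qed.

Lemma geo_mean_tree_root n :
  geo_mean_tree n 1%N ^+ (2 ^ n) = \prod_(j < 2 ^ n) B j.+1.
Proof.
pose z i := geo_mean_tree (n - i).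
have -> : geo_mean_tree n 1%N = level_prod z 0 by rewrite level_prod0 /z subn0.
rewrite (sqr_chain_eq (f := level_prod z)) => [|i lt_in].
  by rewrite /level_prod /z subnn.
apply: level_prod_sqr => j _; rewrite /z /children_prod.
by rewrite (_ : (n - i = (n - i.+1).+1)%N) ?geo_mean_treeS_sqr //; lia.
Qed.

End GeometricMeanTree.

Section LeafBounds.
Variable R : rcfType.
Variables (a b : nat) (u v t : R).
Hypotheses (u_ge0 : 0 <= u) (v_ge0 : 0 <= v) (t_ge0 : 0 <= t).

Definition leaf_bound (j : nat) : R :=
  if (j <= a)%N then u else if (j <= b./2)%N then t
  else if (j <= uphalf b)%N then Num.sqrt (t * v) else v.

Lemma leaf_bound_ge0 j : 0 <= leaf_bound j.
Proof. by rewrite /leaf_bound; do !case: ifP => _ //; rewrite sqrtr_ge0. Qed.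

Lemma prod_leaf_bound N : (a <= b./2)%N -> (uphalf b <= N)%N ->
  \prod_(j < N) leaf_bound j.+1
  = u ^+ a * t ^+ (b./2 - a) * Num.sqrt (t * v) ^+ odd b * v ^+ (N - uphalf b).
Proof.
move=> le_a_half le_uphalf_N.
have le_half_uphalf : (b./2 <= uphalf b)%N by rewrite uphalf_half leq_addl.
rewrite -(big_mkord xpredT (fun j => leaf_bound j.+1)).
have le_aN : (a <= N)%N by lia.
have le_halfN : (b./2 <= N)%N by lia.
rewrite (big_cat_nat (leq0n a) le_aN) (big_cat_nat le_a_half le_halfN).
rewrite (big_cat_nat le_half_uphalf le_uphalf_N) /=.
rewrite (@eq_big_nat _ _ _ 0 a _ (fun=> u)); last first.
  by move=> i /andP[_ lt_ia]; rewrite /leaf_bound lt_ia.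
rewrite (@eq_big_nat _ _ _ a b./2 _ (fun=> t)); last first.
  by move=> i /andP[le_ai lt_i_half]; rewrite /leaf_bound ltnNge le_ai lt_i_half.
rewrite (@eq_big_nat _ _ _ b./2 (uphalf b) _ (fun=> Num.sqrt (t * v)));
  last first.
  move=> i /andP[le_half_i lt_i_uphalf]; have le_ai : (a <= i)%N by lia.
  by rewrite /leaf_bound ltnNge le_ai ltnNge le_half_i lt_i_uphalf.
rewrite (@eq_big_nat _ _ _ (uphalf b) N _ (fun=> v)); last first.
  move=> i /andP[le_uphalf_i _]; have le_ai : (a <= i)%N by lia.
  have le_half_i : (b./2 <= i)%N by lia.
  by rewrite /leaf_bound ltnNge le_ai ltnNge le_half_i ltnNge le_uphalf_i.
by rewrite !prodr_const_nat subn0 uphalf_half addnK !mulrA.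
Qed.

Lemma prod_leaf_bound_sqr N : (2 * a <= b)%N -> (b <= 2 * N)%N ->
  (\prod_(j < N) leaf_bound j.+1) ^+ 2
  = u ^+ (2 * a) * t ^+ (b - 2 * a) * v ^+ (2 * N - b).
Proof.
move=> le_2a_b le_b_2N; rewrite prod_leaf_bound; try lia.
rewrite !exprMn -!exprM.
have -> : Num.sqrt (t * v) ^+ (odd b * 2) = (t * v) ^+ odd b.
  by rewrite mulnC exprM sqr_sqrtr ?mulr_ge0.
rewrite (_ : (b - 2 * a = (b./2 - a) * 2 + odd b)%N); last lia.
rewrite (_ : (2 * N - b = odd b + (N - uphalf b) * 2)%N); last lia.
by rewrite [(2 * a)%N]mulnC !exprD exprMn; ring.
Qed.

Lemma pow_le_prod_leaf_boundE N : (0 < b)%N -> (2 * a <= b <= 2 * N)%N ->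
  (v ^+ N <= \prod_(j < N) leaf_bound j.+1)
  = (v ^+ b <= u ^+ (2 * a) * t ^+ (b - 2 * a)).
Proof.
move=> b_gt0 /andP[le_2a_b le_b_2N].
have prod_ge0 : 0 <= \prod_(j < N) leaf_bound j.+1.
  by apply: prodr_ge0 => j _; exact: leaf_bound_ge0.
rewrite -(ler_pXn2r (n := 2)) ?nnegrE ?exprn_ge0 // prod_leaf_bound_sqr //.
rewrite -exprM (_ : (N * 2 = b + (2 * N - b))%N); last lia.
rewrite exprD.
move: v_ge0; rewrite le_eqVlt => /predU1P[v0|v_gt0].
  by rewrite -v0 expr0n gtn_eqF // mul0r !mulr_ge0 ?exprn_ge0 ?ler0n.
by rewrite ler_pM2r // exprn_gt0.
Qed.

End LeafBounds.

Section ConeSystem.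
Variable R : realType.
Variables (n a b : nat) (u v t : R).

(* The constraints of the theorem, with [n] in place of [k - 1]. *)
Definition cone_system (z : nat -> nat -> R) : Prop :=
  norm2 v ((z 1%N 1%N - z 1%N 2%N) / 2) <= (z 1%N 1%N + z 1%N 2%N) / 2 /\
  (forall i j : nat, (1 <= i <= n - 1)%N -> (1 <= j <= 2 ^ i)%N ->
     norm2 (z i j) ((z i.+1 (2 * j - 1)%N - z i.+1 (2 * j)%N) / 2)
       <= (z i.+1 (2 * j - 1)%N + z i.+1 (2 * j)%N) / 2) /\
  (forall j : nat, (1 <= j <= a)%N -> z n j <= u) /\
  (forall j : nat, (a + 1 <= j <= b./2)%N -> z n j <= t) /\
  (forall j : nat, (b./2 + 1 <= j <= uphalf b)%N ->
     norm2 (z n j) ((t - v) / 2) <= (t + v) / 2) /\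
  (forall j : nat, (uphalf b + 1 <= j <= 2 ^ n)%N -> z n j <= v) /\
  (forall i j : nat, (1 <= i <= n)%N -> (1 <= j <= 2 ^ i)%N -> 0 <= z i j) /\
  0 <= u /\ 0 <= v /\ 0 <= t.

Hypotheses (n_gt0 : (0 < n)%N) (le_2a_b : (2 * a <= b)%N).

Lemma cone_system_geo_mean_tree : 0 <= u -> 0 <= v -> 0 <= t ->
  v ^+ (2 ^ n) <= \prod_(j < 2 ^ n) leaf_bound a b u v t j.+1 ->
  cone_system (fun i => geo_mean_tree (leaf_bound a b u v t) (n - i)).
Proof.
move=> u_ge0 v_ge0 t_ge0 v_le_prod; set B := leaf_bound a b u v t.
have B_ge0 : forall j, 0 <= B j by exact: leaf_bound_ge0.
have node_ge0 d j : 0 <= geo_mean_tree B d j by exact: geo_mean_tree_ge0.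
have v_le_root : v <= geo_mean_tree B n 1.
  by rewrite -(ler_pXn2r (expn_gt0 2 n)) ?nnegrE // geo_mean_tree_root.
split.
  have root_sqr : geo_mean_tree B n 1 ^+ 2
                  = geo_mean_tree B (n - 1) 1 * geo_mean_tree B (n - 1) 2.
    by rewrite -[in LHS](prednK n_gt0) (geo_mean_treeS_sqr B_ge0) !subn1.
  by rewrite rotated_coneE // -root_sqr lerXn2r ?nnegrE.
split.
  move=> i j i_range _; rewrite rotated_coneE //.
  by rewrite (_ : (n - i = (n - i.+1).+1)%N) ?geo_mean_treeS_sqr //; lia.
rewrite subnn /= /B /leaf_bound.
split=> [j j_range|]; first by have -> : (j <= a)%N by lia.
split=> [j j_range|].
  have -> : (j <= a)%N = false by lia.
  by have -> : (j <= b./2)%N by lia.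
split=> [j j_range|].
  have -> : (j <= a)%N = false by lia.
  have -> : (j <= b./2)%N = false by lia.
  have -> : (j <= uphalf b)%N by lia.
  by rewrite rotated_coneE // sqr_sqrtr ?mulr_ge0.
split=> [j j_range|]; last by [].
have -> : (j <= a)%N = false by lia.
have -> : (j <= b./2)%N = false by lia.
by have -> : (j <= uphalf b)%N = false by lia.
Qed.

Lemma cone_system_leaf_le z : cone_system z ->
  forall j, (1 <= j <= 2 ^ n)%N -> z n j <= leaf_bound a b u v t j.
Proof.
case=> _ [_ [le_u [le_t [le_sqrt [le_v [z_ge0 [_ [v_ge0 t_ge0]]]]]]]] j j_range.
rewrite /leaf_bound; case: ifP => [le_ja|/negbT]; first by apply: le_u; lia.
rewrite -ltnNge => lt_aj.
case: ifP => [le_j_half|/negbT]; first by apply: le_t; lia.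
rewrite -ltnNge => lt_half_j; case: ifP => [le_j_uphalf|/negbT]; last first.
  by rewrite -ltnNge => lt_uphalf_j; apply: le_v; lia.
have zj_ge0 : 0 <= z n j by apply: z_ge0; lia.
rewrite -(ger0_norm zj_ge0) -sqrtr_sqr ler_sqrt ?mulr_ge0 //.
by rewrite -rotated_coneE // le_sqrt //; lia.
Qed.

Lemma cone_system_pow_le z : cone_system z ->
  v ^+ (2 ^ n) <= \prod_(j < 2 ^ n) leaf_bound a b u v t j.+1.
Proof.
move=> cs; have [root [node [_ [_ [_ [_ [z_ge0 [_ [v_ge0 _]]]]]]]]] := cs.
(* Placing v at level 0 turns the root constraint into a node constraint. *)
pose y i j := if i == 0%N then v else z i j.
have y_ge0 i j : (i <= n)%N -> (1 <= j <= 2 ^ i)%N -> 0 <= y i j.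
  move=> le_in j_range; rewrite /y; case: (posnP i) => [//|i_gt0].
  apply: z_ge0; lia.
have y_node i j : (i < n)%N -> (1 <= j <= 2 ^ i)%N ->
    y i j ^+ 2 <= children_prod y i j.
  move=> lt_in j_range.
  have le_2j : (2 * j <= 2 ^ i.+1)%N.
    by rewrite expnS leq_mul2l; case/andP: j_range.
  rewrite /children_prod /y /= -rotated_coneE; try by apply: z_ge0; lia.
  case: (posnP i) => [i0|i_gt0]; last by apply: node; lia.
  have j1 : j = 1%N by move: j_range; rewrite i0; lia.
  by rewrite i0 j1.
have v_le_level : v ^+ (2 ^ n) <= level_prod y n.
  rewrite -[v]/(y 0%N 1%N) -level_prod0; apply: sqr_chain_le => i lt_in.
    by apply: level_prod_ge0 => j; apply: y_ge0; rewrite ltnW.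
  by apply: level_prod_sqr_le => j; [apply: y_ge0; rewrite ltnW | apply: y_node].
apply: (le_trans v_le_level); apply: ler_prod => j _.
have j_range : (0 < j.+1 <= 2 ^ n)%N by rewrite /= ltn_ord.
have zj_ge0 : 0 <= z n j.+1 by apply: z_ge0; lia.
by rewrite /y gtn_eqF // zj_ge0 cone_system_leaf_le.
Qed.

Lemma cone_system_iff : (0 < b)%N -> (b <= 2 ^ n.+1)%N ->
  (0 <= u /\ 0 <= v /\ 0 <= t /\ v ^+ b <= u ^+ (2 * a) * t ^+ (b - 2 * a))
  <-> exists z, cone_system z.
Proof.
move=> b_gt0 le_b_2N.
have bounds : (2 * a <= b <= 2 * 2 ^ n)%N by rewrite le_2a_b -expnS.
split=> [[u_ge0 [v_ge0 [t_ge0]]]|[z cs]].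
  rewrite -(pow_le_prod_leaf_boundE u_ge0 v_ge0 t_ge0 b_gt0 bounds) => v_le.
  by eexists; apply: cone_system_geo_mean_tree.
have [_ [_ [_ [_ [_ [_ [_ [u_ge0 [v_ge0 t_ge0]]]]]]]]] := cs.
do 3!split => //.
rewrite -(pow_le_prod_leaf_boundE u_ge0 v_ge0 t_ge0 b_gt0 bounds).
exact: cone_system_pow_le cs.
Qed.

End ConeSystem.

Lemma ler_powR2r (R : realType) (r x y : R) : 0 < r -> 0 <= x -> 0 <= y ->
  (x `^ r <= y `^ r) = (x <= y).
Proof.
move=> r_gt0 x_ge0 y_ge0; apply/idP/idP => [|le_xy].
  by apply: contraTT; rewrite -!ltNge; apply: gt0_ltr_powR; rewrite ?nnegrE.
by apply: (ge0_ler_powR (ltW r_gt0)); rewrite ?nnegrE.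
Qed.

Lemma powR_ratio_leE (R : realType) (q : R) (a b : nat) (u v t : R) :
  q = b%:R / a%:R -> (0 < a)%N -> (2 * a < b)%N -> 0 <= u -> 0 <= v -> 0 <= t ->
  (v `^ (q / (q - 2)) <= t * u `^ (2 / (q - 2)))
  = (v ^+ b <= u ^+ (2 * a) * t ^+ (b - 2 * a)).
Proof.
move=> -> a_gt0 lt_2a_b u_ge0 v_ge0 t_ge0.
set e : R := (b - 2 * a)%:R.
have e_gt0 : 0 < e by rewrite ltr0n subn_gt0.
have e_eq : e = b%:R - 2 * a%:R by rewrite /e natrB ?natrM // ltnW.
have nonzero : (b%:R - 2 * a%:R != 0 :> R) && (a%:R != 0 :> R).
  by rewrite -e_eq gt_eqF //= pnatr_eq0 -lt0n.
have -> : b%:R / a%:R / (b%:R / a%:R - 2) = b%:R / e by rewrite e_eq; field.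
have -> : 2 / (b%:R / a%:R - 2) = (2 * a)%:R / e by rewrite e_eq natrM; field.
rewrite -[LHS](ler_powR2r e_gt0) ?powR_ge0 ?mulr_ge0 ?powR_ge0 //.
rewrite powRM ?powR_ge0 // -!powRrM !divfK ?gt_eqF // !powR_mulrn //.
by rewrite mulrC.
Qed.

Lemma inv_ratio_gt2 (p : rat) (a b : nat) : 2 < p -> p^-1 = a%:R / b%:R ->
  [/\ (0 < a)%N, (2 * a < b)%N & p = b%:R / a%:R].
Proof.
move=> p_gt2 p_inv.
have p_eq : p = b%:R / a%:R by rewrite -[p]invrK p_inv invf_div.
have a_gt0 : (0 < a)%N.
  by rewrite lt0n; apply/eqP => a0; move: p_gt2; rewrite p_eq a0 invr0 mulr0.
split=> //; move: p_gt2.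
by rewrite p_eq ltr_pdivlMr ?ltr0n // -natrM ltr_nat.
Qed.

Lemma up_log2_gt1 b : (1 < b)%N -> (1 < up_log 2 b.+1)%N.
Proof. by move=> b_gt1; rewrite up_log2S ?ltnS ?up_log_gt0 //=; lia. Qed.

Theorem proposition3p6 (R : realType) (p : rat) (a b : nat) :
  2 < p ->
  coprime a b -> (0 < b)%N ->
  p^-1 = (a%:R / b%:R : rat) ->
  let k := up_log 2 b.+1 in
  let pR : R := ratr p in
  forall u v t : R,
    (0 <= u /\ 0 <= v /\ 0 <= t /\
     v `^ (pR / (pR - 2)) <= t * u `^ (2 / (pR - 2)))
    <->
    (exists z : nat -> nat -> R,
      (* z i j is the j-th coordinate (1-based) of z^i, i = 1..k-1, j = 1..2^i *)
      norm2 v ((z 1%N 1%N - z 1%N 2%N) / 2) <= (z 1%N 1%N + z 1%N 2%N) / 2 /\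
      (forall i j : nat, (1 <= i <= k - 2)%N -> (1 <= j <= 2 ^ i)%N ->
         norm2 (z i j) ((z i.+1 (2 * j - 1)%N - z i.+1 (2 * j)%N) / 2)
           <= (z i.+1 (2 * j - 1)%N + z i.+1 (2 * j)%N) / 2) /\
      (forall j : nat, (1 <= j <= a)%N -> z (k - 1)%N j <= u) /\
      (forall j : nat, (a + 1 <= j <= b./2)%N -> z (k - 1)%N j <= t) /\
      (forall j : nat, (b./2 + 1 <= j <= uphalf b)%N ->
         norm2 (z (k - 1)%N j) ((t - v) / 2) <= (t + v) / 2) /\
      (forall j : nat, (uphalf b + 1 <= j <= 2 ^ (k - 1))%N -> z (k - 1)%N j <= v) /\
      (forall i j : nat, (1 <= i <= k - 1)%N -> (1 <= j <= 2 ^ i)%N -> 0 <= z i j) /\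
      0 <= u /\ 0 <= v /\ 0 <= t).
Proof.
move=> p_gt2 _ b_gt0 p_inv k pR u v t.
have [a_gt0 lt_2a_b p_eq] := inv_ratio_gt2 p_gt2 p_inv.
have pR_eq : pR = b%:R / a%:R by rewrite /pR p_eq fmorph_div !rmorph_nat.
have b_gt1 : (1 < b)%N by apply: leq_ltn_trans lt_2a_b; rewrite muln_gt0.
have k_gt1 : (1 < k)%N := up_log2_gt1 b_gt1.
have b_lt : (b < 2 ^ k)%N := up_logP b.+1 (isT : (1 < 2)%N).
have b_le : (b <= 2 ^ (k - 1).+1)%N.
  by rewrite subn1 prednK ?(ltnW k_gt1) ?(ltnW b_lt).
have depth_gt0 : (0 < k - 1)%N by rewrite subn_gt0.
rewrite (_ : (k - 2 = (k - 1) - 1)%N); last by rewrite -subnDA.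
have system_iff := cone_system_iff u v t depth_gt0 (ltnW lt_2a_b) b_gt0 b_le.
apply: (iff_trans _ system_iff).
by split=> -[u_ge0 [v_ge0 [t_ge0]]]; rewrite (powR_ratio_leE pR_eq) // => pow_le.
Qed.
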